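(* Assume $a/b>\sqrt2$. For every self-intersected 4-periodic $P_1P_2P_3P_4$ (any parameter $u$ with $|u|\le u_{\max}$), the signed area of the polygon $P_1P_2P_3P_4$ is $0$, and the signed area of its outer polygon (whenever the outer polygon is defined) is also $0$.
   Context: The elliptic billiard is $\mathcal{E}: x^2/a^2+y^2/b^2=1$, $a>b>0$, $c=\sqrt{a^2-b^2}$. For $a/b>\sqrt2$ the self-intersected 4-periodics (closed 4-bounce billiard trajectories tangent to the confocal hyperbola $x^2/a''^2-y^2/b''^2=1$, $a''=a\sqrt{a^2-2b^2}/c$, $b''=b^2/c$) are parametrized by $u$ with $|u|\le u_{\max}:=\frac{a}{c^2}\sqrt{a^2-2b^2}$: $P_1=(au,\,b\sqrt{1-u^2})$, $P_3=(-au,\,b\sqrt{1-u^2})$, $P_2=\left(-\frac{a\sqrt{a^2(a^2-2b^2)-c^4u^2}}{c^2\sqrt{1-u^2}},\,-\frac{b^3}{c^2\sqrt{1-u^2}}\right)$, $P_4=\left(\frac{a\sqrt{a^2(a^2-2b^2)-c^4u^2}}{c^2\sqrt{1-u^2}},\,-\frac{b^3}{c^2\sqrt{1-u^2}}\right)$. The outer polygon has vertices $P_i'$, $i=1,\dots,4$, where $P_i'$ is the intersection of the tangent lines to $\mathcal{E}$ at $P_i$ and $P_{i+1}$ (indices mod 4). The signed area of a closed polygon $Q_1\dots Q_N$ with $Q_i=(x_i,y_i)$ is $\frac12\sum_{i=1}^N (x_iy_{i+1}-x_{i+1}y_i)$ (indices mod $N$). *)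

From Stdlib Require Import Reals List.
Import ListNotations.
Open Scope R_scope.

Definition pt := (R * R)%type.

Definition cc (a b : R) : R := sqrt (a^2 - b^2).

Definition umax (a b : R) : R := a / (cc a b)^2 * sqrt (a^2 - 2*b^2).

Definition P1 (a b u : R) : pt := (a*u, b * sqrt (1 - u^2)).
Definition P3 (a b u : R) : pt := (-(a*u), b * sqrt (1 - u^2)).
Definition P2 (a b u : R) : pt :=
  (- (a * sqrt (a^2*(a^2 - 2*b^2) - (cc a b)^4 * u^2)) / ((cc a b)^2 * sqrt (1 - u^2)),
   - b^3 / ((cc a b)^2 * sqrt (1 - u^2))).
Definition P4 (a b u : R) : pt :=
  ((a * sqrt (a^2*(a^2 - 2*b^2) - (cc a b)^4 * u^2)) / ((cc a b)^2 * sqrt (1 - u^2)),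
   - b^3 / ((cc a b)^2 * sqrt (1 - u^2))).

(* Tangent line to x^2/a^2 + y^2/b^2 = 1 at p = (x0,y0):
   (x0/a^2) x + (y0/b^2) y = 1.  Two tangent lines meet in a single point iff
   the determinant below is nonzero. *)
Definition tan_det (a b : R) (p q : pt) : R :=
  (fst p / a^2) * (snd q / b^2) - (fst q / a^2) * (snd p / b^2).

(* intersection point of the tangent lines at p and q (Cramer's rule);
   meaningful when tan_det a b p q <> 0 *)
Definition tan_meet (a b : R) (p q : pt) : pt :=
  ((snd q / b^2 - snd p / b^2) / tan_det a b p q,
   (fst p / a^2 - fst q / a^2) / tan_det a b p q).

Fixpoint shoelace_aux (first : pt) (l : list pt) : R :=
  match l with
  | nil => 0
  | p :: nil => fst p * snd first - fst first * snd p
  | p :: ((q :: _) as l') => (fst p * snd q - fst q * snd p) + shoelace_aux first l'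
  end.

Definition signed_area (l : list pt) : R :=
  match l with
  | nil => 0
  | p :: _ => / 2 * shoelace_aux p l
  end.

From Stdlib Require Import Reals List Lra.
Import ListNotations.
Open Scope R_scope.

(* Both areas vanish for a symmetry reason.  Let [sigma] be the reflection in
   the y-axis.  It swaps P1 <-> P3 and P2 <-> P4, so it maps the quadrilateral
   P1 P2 P3 P4 onto P3 P4 P1 P2, the same closed polygon traversed from another
   starting vertex.  A reflection reverses signed area while a cyclic shift of
   the vertices preserves it, hence the area equals its own negative.

   Since the ellipse is symmetric
   about the y-axis, the meeting point of two tangents commutes with [sigma];
   so the outer polygon of a symmetric quadrilateral is again symmetric.  The
   theorem then only needs P3 = sigma P1 and P4 = sigma P2.  Note that no
   hypothesis on a, b, u is needed, and the tangent-meeting points need not be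
   nondegenerate. *)

Definition reflect_y (p : pt) : pt := (- fst p, snd p).

Lemma reflect_y_involutive (p : pt) : reflect_y (reflect_y p) = p.
Proof. destruct p as [x y]; unfold reflect_y; simpl; now rewrite Ropp_involutive. Qed.

Lemma shoelace_aux_reflect_y (f : pt) (l : list pt) :
  shoelace_aux (reflect_y f) (map reflect_y l) = - shoelace_aux f l.
Proof.
  induction l as [| p l IH]; simpl; [ring |].
  destruct l as [| q l]; simpl in *; unfold reflect_y in *; simpl in *.
  - ring.
  - rewrite IH; ring.
Qed.

Lemma signed_area_reflect_y (l : list pt) :
  signed_area (map reflect_y l) = - signed_area l.
Proof.
  destruct l as [| p l]; [simpl; ring |].
  unfold signed_area; cbn [map].
  change (reflect_y p :: map reflect_y l) with (map reflect_y (p :: l)).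
  rewrite shoelace_aux_reflect_y; ring.
Qed.

Lemma signed_area_quad_rotate (p1 p2 p3 p4 : pt) :
  signed_area [p1; p2; p3; p4] = signed_area [p2; p3; p4; p1].
Proof. unfold signed_area; simpl; ring. Qed.

Lemma signed_area_symmetric_quad (p q : pt) :
  signed_area [p; q; reflect_y p; reflect_y q] = 0.
Proof.
  set (A := signed_area [p; q; reflect_y p; reflect_y q]).
  assert (HA : A = - A).
  { unfold A; rewrite <- signed_area_reflect_y; cbn [map].
    rewrite !reflect_y_involutive, 2!signed_area_quad_rotate; reflexivity. }
  lra.
Qed.

(* The ellipse is symmetric about the y-axis, so the intersection of the
   tangents at two points commutes with the reflection. *)
Lemma tan_meet_reflect_y (a b : R) (p q : pt) :
  tan_meet a b (reflect_y p) (reflect_y q) = reflect_y (tan_meet a b p q).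
Proof.
  assert (Hdet : tan_det a b (reflect_y p) (reflect_y q) = - tan_det a b p q).
  { unfold tan_det, reflect_y; simpl; unfold Rdiv; ring. }
  unfold tan_meet; rewrite Hdet; unfold reflect_y; simpl.
  unfold Rdiv; rewrite Rinv_opp; f_equal; ring.
Qed.

Lemma outer_area_symmetric_quad (a b : R) (p q : pt) :
  signed_area [tan_meet a b p q; tan_meet a b q (reflect_y p);
               tan_meet a b (reflect_y p) (reflect_y q);
               tan_meet a b (reflect_y q) p] = 0.
Proof.
  replace (tan_meet a b (reflect_y q) p)
    with (reflect_y (tan_meet a b q (reflect_y p)))
    by (now rewrite <- tan_meet_reflect_y, reflect_y_involutive).
  rewrite tan_meet_reflect_y.
  apply signed_area_symmetric_quad.
Qed.

Lemma P3_reflect_y (a b u : R) : P3 a b u = reflect_y (P1 a b u).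
Proof. reflexivity. Qed.

Lemma P4_reflect_y (a b u : R) : P4 a b u = reflect_y (P2 a b u).
Proof. unfold P2, P4, reflect_y; simpl; f_equal; unfold Rdiv; ring. Qed.

Theorem mainTheorem2 (a b u : R) :
  0 < b -> b < a -> a / b > sqrt 2 -> Rabs u <= umax a b ->
  signed_area (P1 a b u :: P2 a b u :: P3 a b u :: P4 a b u :: nil) = 0 /\
  (tan_det a b (P1 a b u) (P2 a b u) <> 0 ->
   tan_det a b (P2 a b u) (P3 a b u) <> 0 ->
   tan_det a b (P3 a b u) (P4 a b u) <> 0 ->
   tan_det a b (P4 a b u) (P1 a b u) <> 0 ->
   signed_area (tan_meet a b (P1 a b u) (P2 a b u) ::
                tan_meet a b (P2 a b u) (P3 a b u) ::
                tan_meet a b (P3 a b u) (P4 a b u) ::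
                tan_meet a b (P4 a b u) (P1 a b u) :: nil) = 0).
Proof.
  intros _ _ _ _.
  rewrite P3_reflect_y, P4_reflect_y.
  split.
  - apply signed_area_symmetric_quad.
  - intros _ _ _ _; apply outer_area_symmetric_quad.
Qed.
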